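(* Let $q$ be a prime power, $\xi$ a generator of the cyclic group $\mathbb{F}_q^*$, and $t\ge 2$ an integer. Let $A'_{t,q}$ be the $t\times\big(\binom{t}{2}(q-1)+t+q-2\big)$ matrix obtained from $A_{t,q}$ by appending $q-2$ columns whose first entries are $\xi,\xi^2,\dots,\xi^{q-2}$ respectively and whose other entries are $0$. Then the linear code $\mathcal{C}'$ generated by $A'_{t,q}$ is a minimal $\big[\binom{t}{2}(q-1)+t+q-2,\,t\big]_q$ code satisfying Property (P).
   Context: $A_{t,q}=(\mathbb{I}_t\mid \mathbb{B}_{t,q})$ is the $t\times\big(t+\binom{t}{2}(q-1)\big)$ matrix over $\mathbb{F}_q$, where $\mathbb{I}_t$ is the identity matrix and $\mathbb{B}_{t,q}$ has as columns exactly the vectors $e_i+\lambda e_j$, one for each pair $1\le i<j\le t$ and each $\lambda\in\mathbb{F}_q^*$. The code generated by a matrix is its row space. Property (P): every nonzero codeword $w=(w_1,\dots,w_n)$ satisfies $\{w_1,\dots,w_n\}=\mathbb{F}_q$. A linear code $\mathcal{C}$ is minimal if for all nonzero $c,c'\in\mathcal{C}$ whose supports (sets of nonzero coordinate indices) satisfy $\mathrm{Supp}(c')\subseteq\mathrm{Supp}(c)$, there is $\lambda\in\mathbb{F}_q^*$ with $c'=\lambda c$. *)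

From HB Require Import structures.
From mathcomp Require Import all_boot all_order all_algebra all_field.
Set Implicit Arguments. Unset Strict Implicit. Unset Printing Implicit Defensive.
Import GRing.Theory.
Local Open Scope ring_scope.

(* Column indices of A_{t,q}: identity columns 'I_t, then the columns of
   B_{t,q} indexed by triples (i, j, lambda) with i < j and lambda <> 0. *)
Notation pairIdx F t :=
  {p : 'I_t * 'I_t * F | ((p.1.1 < p.1.2)%N && (p.2 != 0))}.

Notation colIdx F t := ('I_t + pairIdx F t + 'I_(#|F| - 2))%type.

Definition colA' (F : finFieldType) (t : nat) (xi : F) (c : colIdx F t)
  : 'cV[F]_t :=
  match c with
  | inl (inl i) => \col_r (r == i)%:R
  | inl (inr p) => let: (i, j, l) := val p in
                   \col_r ((r == i)%:R + l * (r == j)%:R)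
  | inr k => \col_r (if val r == 0%N then xi ^+ k.+1 else 0)
  end.

Definition Aprime (F : finFieldType) (t : nat) (xi : F)
  : 'M[F]_(t, #|{: colIdx F t}|) :=
  \matrix_(r, j) colA' xi (enum_val j) r 0.

Definition in_code (F : fieldType) (k n : nat) (A : 'M[F]_(k, n)) (w : 'rV[F]_n) :=
  exists x : 'rV[F]_k, w = x *m A.

Definition supp (F : fieldType) (n : nat) (w : 'rV[F]_n) : {set 'I_n} :=
  [set j | w 0 j != 0].

Definition minimal_code (F : fieldType) (k n : nat) (A : 'M[F]_(k, n)) :=
  forall c c' : 'rV[F]_n, in_code A c -> in_code A c' -> c != 0 -> c' != 0 ->
    supp c' \subset supp c -> exists2 l : F, l != 0 & c' = l *: c.

Definition propertyP (F : finFieldType) (k n : nat) (A : 'M[F]_(k, n)) :=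
  forall w : 'rV[F]_n, in_code A w -> w != 0 ->
    forall a : F, exists j : 'I_n, w 0 j = a.

(* The identity columns make the rows of A'_{t,q} independent and read off
   every coordinate x_i of the message x. For i <> j and l <> 0 some column is
   (up to a nonzero factor) e_i + l e_j, whose coordinate x_i + l x_j vanishes
   exactly when x_i / x_j = -l: the zero set of x *m A' therefore determines all
   ratios x_i / x_j, which gives minimality. For Property (P), if x_j <> 0 for
   some j > 0 the columns e_1 + l e_j already take every value; otherwise
   x = x_1 e_1 and the values 0, x_1 and x_1 xi^k (0 < k < q-1) are supplied by
   e_2, e_1 and the appended columns. *)
From HB Require Import structures.
From mathcomp Require Import all_boot all_order all_algebra all_field.
From mathcomp Require Import ring zify.
Import GRing.Theory.
Local Open Scope ring_scope.

Lemma card_ltn_pairs (t : nat) :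
  #|[set ij : 'I_t * 'I_t | (ij.1 < ij.2)%N]| = 'C(t, 2).
Proof.
rewrite -sum1_card big_mkcond /=.
under eq_bigr => ij _ do rewrite inE.
rewrite -(pair_big xpredT xpredT (fun i j : 'I_t => if (i < j)%N then 1%N else 0%N)).
rewrite /= exchange_big -bin2_sum big_mkord; apply: eq_bigr => j _.
have count_below (n : nat) : (\sum_(i < n) (if (i < j)%N then 1 else 0) = minn j n)%N.
  elim: n => [|n IHn]; first by rewrite big_ord0; lia.
  by rewrite big_ord_recr /= IHn; case: ltnP => ?; lia.
by rewrite count_below; have := ltn_ord j; lia.
Qed.

Lemma card_colIdx (F : finFieldType) (t : nat) :
  #|{: colIdx F t}| = ('C(t, 2) * (#|F| - 1) + t + (#|F| - 2))%N.
Proof.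
rewrite !card_sum !card_ord card_sig.
have -> : #|[pred p : 'I_t * 'I_t * F | (p.1.1 < p.1.2)%N && (p.2 != 0)]| =
          #|setX [set ij : 'I_t * 'I_t | (ij.1 < ij.2)%N] [set~ (0 : F)]|.
  by apply: eq_card => p; rewrite !inE.
by rewrite cardsX card_ltn_pairs cardsC1 subn1 [(t + _)%N]addnC.
Qed.

Lemma expf_card_sub1 {F : finFieldType} {x : F} : x != 0 -> x ^+ (#|F| - 1) = 1.
Proof.
move=> x_neq0; have F_gt0 : (0 < #|F|)%N by apply/card_gt0P; exists 0.
apply: (mulfI x_neq0); rewrite -exprS mulr1.
have -> : (#|F| - 1).+1 = #|F| by lia.
exact: expf_card.
Qed.

Lemma exp_generator_lt {F : finFieldType} {xi : F} (k : nat) :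
  xi != 0 -> exists2 m, (m < #|F| - 1)%N & xi ^+ k = xi ^+ m.
Proof.
move=> xi_neq0; have F_gt1 : (1 < #|F|)%N.
  by apply/card_gt1P; exists 0, 1; rewrite eq_sym oner_neq0.
exists (k %% (#|F| - 1))%N; first by apply: ltn_pmod; lia.
by rewrite (expr_mod _ (expf_card_sub1 xi_neq0)).
Qed.

Lemma row_neq0P {F : fieldType} {n : nat} {x : 'rV[F]_n} :
  x != 0 -> exists i, x 0 i != 0.
Proof.
move=> x_neq0; apply/existsP; rewrite -negb_forall.
by apply: contra x_neq0 => /forallP x0; apply/eqP/rowP => i; rewrite mxE; apply/eqP.
Qed.

Section GeneratorMatrix.
Variables (F : finFieldType) (t : nat) (xi : F).

Local Notation A := (Aprime t xi).
Local Notation coord x c := ((x *m A) 0 (enum_rank c)).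

Lemma coordE (x : 'rV[F]_t) (c : colIdx F t) :
  coord x c = \sum_r x 0 r * colA' xi c r 0.
Proof. by rewrite mxE; apply: eq_bigr => r _; rewrite mxE enum_rankK. Qed.

Lemma sum_mul_delta (x : 'rV[F]_t) (i : 'I_t) :
  \sum_r x 0 r * (r == i)%:R = x 0 i.
Proof.
by rewrite (bigD1 i) //= eqxx mulr1 big1 ?addr0 // => r /negbTE ->; rewrite mulr0.
Qed.

Lemma coord_unit (x : 'rV[F]_t) (i : 'I_t) :
  coord x (inl (inl i)) = x 0 i.
Proof.
by rewrite coordE -(sum_mul_delta x i); apply: eq_bigr => r _; rewrite mxE.
Qed.

Lemma coord_pair (x : 'rV[F]_t) (i j : 'I_t) (l : F)
    (ijl : (i < j)%N && (l != 0)) :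
  coord x (inl (inr (exist _ (i, j, l) ijl))) = x 0 i + l * x 0 j.
Proof.
rewrite coordE -(sum_mul_delta x i) -(sum_mul_delta x j) mulr_sumr -big_split.
by apply: eq_bigr => r _; rewrite mxE /=; ring.
Qed.

Lemma coord_appended (x : 'rV[F]_t) (k : 'I_(#|F| - 2)) (i0 : 'I_t) :
  val i0 = 0%N -> coord x (inr k) = x 0 i0 * xi ^+ k.+1.
Proof.
move=> i0E; rewrite coordE (bigD1 i0) //= mxE i0E eqxx big1 ?addr0 // => r r_neq.
rewrite mxE; case: eqP => [rE|]; last by rewrite mulr0.
by case/eqP: r_neq; apply: val_inj; rewrite /= rE i0E.
Qed.

(* The columns (i, j, l) only exist for i < j; for i > j rescale (j, i, l^-1). *)
Lemma coord_pair_sym {i j : 'I_t} {l : F} : i != j -> l != 0 ->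
  exists2 mu : F, mu != 0 &
    exists c, forall x : 'rV[F]_t, coord x c = mu * (x 0 i + l * x 0 j).
Proof.
move=> i_neq_j l_neq0; case: (ltngtP i j) => [ij | ji | /val_inj ijE].
- exists 1; first exact: oner_neq0.
  have ijl : (i < j)%N && (l != 0) by rewrite ij.
  by exists (inl (inr (exist _ (i, j, l) ijl))); move=> x; rewrite coord_pair mul1r.
- exists l^-1; first by rewrite invr_eq0.
  have jil : (j < i)%N && (l^-1 != 0) by rewrite ji invr_eq0.
  by exists (inl (inr (exist _ (j, i, l^-1) jil))); move=> x; rewrite coord_pair; field.
- by rewrite ijE eqxx in i_neq_j.
Qed.

Lemma rank_Aprime : \rank A = t.
Proof.
apply/eqP; apply/row_freeP.
exists (\matrix_(j, r) (enum_val j == (inl (inl r) : colIdx F t))%:R).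
apply/matrixP => i r; rewrite !mxE (bigD1 (enum_rank (inl (inl r) : colIdx F t))) //=.
rewrite big1 ?addr0 => [|j j_neq].
  rewrite mxE enum_rankK !mxE enum_rankK eqxx mulr1.
  by case: (r == i).
rewrite [X in _ * X]mxE; have /negbTE -> : enum_val j != (inl (inl r) : colIdx F t).
  by apply: contra j_neq => /eqP <-; rewrite enum_valK.
by rewrite mulr0.
Qed.

Lemma codeword_zeros_scale (x y : 'rV[F]_t) : x != 0 ->
  (forall c, coord x c = 0 -> coord y c = 0) -> exists l, y = l *: x.
Proof.
move=> /row_neq0P [i x_i] zeros; exists (y 0 i / x 0 i); apply/rowP => j.
rewrite mxE; have [x_j0 | x_j] := eqVneq (x 0 j) 0.
  by move: (zeros (inl (inl j))); rewrite !coord_unit x_j0 mulr0 => ->.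
have [-> | i_neq_j] := eqVneq i j; first by rewrite divfK.
have l_neq0 : - (x 0 i / x 0 j) != 0 by rewrite oppr_eq0 mulf_neq0 ?invr_eq0.
have [mu mu_neq0 [c coord_c]] := coord_pair_sym i_neq_j l_neq0.
have y_c : coord y c = 0 by apply: zeros; rewrite coord_c; field.
move: y_c; rewrite coord_c => /eqP; rewrite mulf_eq0 (negbTE mu_neq0) /=.
rewrite addr_eq0 => /eqP y_i; rewrite y_i; field.
by apply/andP.
Qed.

Lemma minimal_Aprime : minimal_code A.
Proof.
move=> _ _ [x ->] [y ->] xA_neq0 yA_neq0 supp_sub.
have x_neq0 : x != 0 by apply: contra xA_neq0 => /eqP ->; rewrite mul0mx.
have [l yE] : exists l, y = l *: x.
  apply: codeword_zeros_scale => // c x_c; apply/eqP; apply/negPn/negP => y_c.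
  by have := subsetP supp_sub (enum_rank c); rewrite !inE x_c eqxx y_c => /(_ isT).
exists l; last by rewrite yE scalemxAl.
by apply: contra yA_neq0 => /eqP l0; rewrite yE l0 scale0r mul0mx.
Qed.

Section PropertyP.
Variables (i0 i1 : 'I_t).
Hypotheses (i0E : val i0 = 0%N) (i1E : val i1 = 1%N).
Hypotheses (xi_neq0 : xi != 0) (xi_gen : forall z : F, z != 0 -> exists k, z = xi ^+ k).

Lemma coord_values_off_axis (x : 'rV[F]_t) (j : 'I_t) :
  (0 < j)%N -> x 0 j != 0 -> forall a, exists c, coord x c = a.
Proof.
move=> j_gt0 x_j a; have [-> | a_neq] := eqVneq a (x 0 i0).
  by exists (inl (inl i0)); rewrite coord_unit.
have i0jl : (i0 < j)%N && ((a - x 0 i0) / x 0 j != 0).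
  by rewrite i0E j_gt0 mulf_neq0 ?invr_eq0 ?subr_eq0.
by exists (inl (inr (exist _ (i0, j, (a - x 0 i0) / x 0 j) i0jl)));
  rewrite coord_pair; field.
Qed.

Lemma coord_values_on_axis (x : 'rV[F]_t) :
  x 0 i0 != 0 -> x 0 i1 = 0 -> forall a, exists c, coord x c = a.
Proof.
move=> x_i0 x_i1 a; have [-> | a_neq0] := eqVneq a 0.
  by exists (inl (inl i1)); rewrite coord_unit.
have [k akE] := xi_gen _ (mulf_neq0 a_neq0 (invr_neq0 x_i0)).
have [[|m] m_lt] := exp_generator_lt k xi_neq0; rewrite -akE => am.
  by exists (inl (inl i0)); rewrite coord_unit -(divfK x_i0 a) am expr0 mul1r.
have m_lt' : (m < #|F| - 2)%N by lia.
exists (inr (Ordinal m_lt')); rewrite (coord_appended _ _ _ i0E) /= -am.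
by rewrite mulrC divfK.
Qed.

Lemma propertyP_Aprime : propertyP A.
Proof.
move=> _ [x ->] xA_neq0 a.
have x_neq0 : x != 0 by apply: contra xA_neq0 => /eqP ->; rewrite mul0mx.
suff [c <-] : exists c, coord x c = a by exists (enum_rank c).
have [/existsP [j /andP [j_gt0 x_j]] | on_axis] :=
  boolP [exists j : 'I_t, (0 < j)%N && (x 0 j != 0)].
  exact: coord_values_off_axis j_gt0 x_j a.
have x_off0 (j : 'I_t) : (0 < j)%N -> x 0 j = 0.
  move=> j_gt0; apply/eqP; apply: contraNT on_axis => x_j.
  by apply/existsP; exists j; rewrite j_gt0.
have x_i0 : x 0 i0 != 0.
  have [j x_j] := row_neq0P x_neq0; have [j0 | j_gt0] := posnP j.
    by rewrite (_ : i0 = j) //; apply: val_inj; rewrite /= i0E j0.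
  by rewrite x_off0 ?eqxx in x_j.
have x_i1 : x 0 i1 = 0 by rewrite x_off0 // i1E.
exact: coord_values_on_axis x_i0 x_i1 a.
Qed.

End PropertyP.
End GeneratorMatrix.

Theorem mainTheorem7 (F : finFieldType) (xi : F) (t : nat)
  (ht : (2 <= t)%N)
  (hxi0 : xi != 0)
  (hgen : forall x : F, x != 0 -> exists k : nat, x = xi ^+ k) :
  #|{: colIdx F t}| = ('C(t, 2) * (#|F| - 1) + t + (#|F| - 2))%N /\
  \rank (Aprime t xi) = t /\
  minimal_code (Aprime t xi) /\
  propertyP (Aprime t xi).
Proof.
have t_gt0 : (0 < t)%N by lia.
have t_gt1 : (1 < t)%N by lia.
split; first exact: card_colIdx.
split; first exact: rank_Aprime.
split; first exact: minimal_Aprime.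
exact: (@propertyP_Aprime F t xi (Ordinal t_gt0) (Ordinal t_gt1)).
Qed.
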